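(* Fix a company $i\in\mathcal C$ and suppose that every vehicle of company $i$ can reach at least one station, i.e. $\bigcup_{j\in\mathcal M}\mathcal F^i_j=\mathcal V_i$. Define $\overline{\mathcal K}_i\subseteq\mathcal P_{\mathcal M}$ as the set of all $x^i\in\mathcal P_{\mathcal M}$ such that for every proper subset $S\subsetneq\mathcal M$, $$N_i\sum_{j\in S}x^i_j\;\le\;\max\Big\{0,\ \Big|\bigcup_{j\in S}\mathcal F^i_j\Big|-|S|\Big\}.$$ If $\overline{\mathcal K}_i\neq\emptyset$, then every $x^i\in\overline{\mathcal K}_i$ is feasible, and $\overline{\mathcal K}_i$ is compact and convex.
   Context: Setting: $\mathcal M$ is a finite set of charging stations with $m=|\mathcal M|\ge 2$. Company $i$ owns a finite set $\mathcal V_i$ of vehicles with $N_i=|\mathcal V_i|\ge 1$. For each station $j\in\mathcal M$, $\mathcal F^i_j\subseteq\mathcal V_i$ is the set of vehicles of company $i$ that can reach station $j$. $\mathcal P_{\mathcal M}=\{x\in\mathbb R_{\ge 0}^{\mathcal M}:\sum_{j\in\mathcal M}x_j=1\}$. Rounding: given $x^i\in\mathcal P_{\mathcal M}$, a rounding of $x^i$ is an integer vector $n^i\in\mathbb Z_{\ge0}^{\mathcal M}$ with $n^i_j\in\{\lfloor N_ix^i_j\rfloor,\lceil N_ix^i_j\rceil\}$ for every $j$ and $\sum_{j\in\mathcal M}n^i_j=N_i$. A valid assignment for $n^i$ is a map $\phi:\mathcal V_i\to\mathcal M$ with $v\in\mathcal F^i_{\phi(v)}$ for all $v\in\mathcal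 V_i$ and $|\phi^{-1}(j)|=n^i_j$ for all $j\in\mathcal M$. The vector $x^i\in\mathcal P_{\mathcal M}$ is called feasible if every rounding of $x^i$ admits a valid assignment. *)

From HB Require Import structures.
From mathcomp Require Import all_boot all_order all_algebra.
From mathcomp Require Import all_classical all_reals all_analysis.
Set Implicit Arguments. Unset Strict Implicit. Unset Printing Implicit Defensive.
Import Order.TTheory GRing.Theory Num.Theory.
Local Open Scope ring_scope.

(* Stations are 'I_m; vehicles of the fixed company form the finType V,
   N = #|V|; F j : {set V} = vehicles that can reach station j.
   A vector of R^M is a row vector x : 'rV[R]_m, x_j = x ord0 j. *)

Definition simplex (R : realType) (m : nat) : set 'rV[R]_m :=
  [set x | (forall j, 0 <= x ord0 j) /\ \sum_(j < m) x ord0 j = 1].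

Definition is_rounding (R : realType) (m N : nat) (x : 'rV[R]_m)
    (n : 'I_m -> nat) : Prop :=
  (forall j, (n j)%:Z = Num.floor (N%:R * x ord0 j)
          \/ (n j)%:Z = Num.ceil (N%:R * x ord0 j))
  /\ (\sum_(j < m) n j)%N = N.

Definition valid_assignment (V : finType) (m : nat) (F : 'I_m -> {set V})
    (n : 'I_m -> nat) (phi : V -> 'I_m) : Prop :=
  (forall v, v \in F (phi v)) /\ (forall j, #|[set v | phi v == j]| = n j).

Definition feasible (R : realType) (V : finType) (m : nat)
    (F : 'I_m -> {set V}) (x : 'rV[R]_m) : Prop :=
  simplex x /\
  forall n, is_rounding #|V| x n -> exists phi, valid_assignment F n phi.

Definition Kbar (R : realType) (V : finType) (m : nat)
    (F : 'I_m -> {set V}) : set 'rV[R]_m :=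
  [set x | simplex x /\
     forall S : {set 'I_m}, (S != [set: 'I_m])%SET ->
       #|V|%:R * (\sum_(j in S) x ord0 j)
         <= Num.max 0 ((#|\bigcup_(j in S) F j|)%:R - (#|S|)%:R)].

(* By the definition of a rounding, n_j <= N x_j + 1 for every station, and the
   stations of S receive no vehicle at all when x vanishes on S; with the
   constraints of Kbar this gives the station-side Hall condition
   sum_(j in S) n_j <= |U_(j in S) F_j| for every S.  Counting complements turns
   it into the vehicle-side condition |W| <= sum of n_j over the stations
   reachable from W, and the capacitated Hall theorem (proved by Rado's edge
   deletion) yields an assignment meeting every n_j exactly.  Compactness and
   convexity hold because Kbar is cut out of the simplex by finitely many
   closed linear inequalities. *)

From HB Require Import structures.
From mathcomp Require Import all_boot all_order all_algebra.
From mathcomp Require Import zify.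
Set Implicit Arguments. Unset Strict Implicit. Unset Printing Implicit Defensive.

Section CapacitatedHall.
Variables (V I : finType) (n : I -> nat).

Definition capacity (X : {set I}) := (\sum_(j in X) n j)%N.

Definition nbhd (A : V -> {set I}) (W : {set V}) := \bigcup_(v in W) A v.

Definition hall_condition (A : V -> {set I}) :=
  forall W : {set V}, #|W| <= capacity (nbhd A W).

Definition exact_assignment (A : V -> {set I}) (phi : V -> I) :=
  (forall v, phi v \in A v) /\ forall j, #|[set v | phi v == j]| = n j.

Lemma hall_conditionP (A : V -> {set I}) :
  reflect (hall_condition A) [forall W : {set V}, #|W| <= capacity (nbhd A W)].
Proof. exact: forallP. Qed.

Lemma capacityS (X Y : {set I}) : X \subset Y -> capacity X <= capacity Y.
Proof.
by move=> sXY; rewrite /capacity [X in _ <= X](big_setID X) (setIidPr sXY) leq_addr.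
Qed.

Lemma capacityUI (X Y : {set I}) :
  capacity (X :|: Y) + capacity (X :&: Y) = capacity X + capacity Y.
Proof.
rewrite /capacity (@big_setID _ _ _ _ (X :|: Y) Y) (@big_setID _ _ _ _ X Y).
rewrite (setIidPr (subsetUr X Y)) setDUl setDv setU0 /=; lia.
Qed.

Lemma capacityC (X : {set I}) :
  capacity X + capacity (~: X) = (\sum_j n j)%N.
Proof.
transitivity (\sum_(j in [set: I]) n j)%N; last by apply: eq_bigl => j; rewrite inE.
by rewrite (big_setID X) setTI setTD.
Qed.

Lemma hall_assignment_singleton (A : V -> {set I}) :
  hall_condition A -> (forall v, #|A v| <= 1) -> (\sum_j n j)%N = #|V| ->
  exists phi, exact_assignment A phi.
Proof.
move=> hallA le1A sum_n.
have /fin_all_exists [phi Aphi] v : exists j, A v = [set j].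
  apply/cards1P; rewrite eqn_leq le1A card_gt0; apply/set0Pn.
  have := hallA [set v]; rewrite /nbhd big_set1 cards1.
  case: (set_0Vmem (A v)) => [->|[j Aj] _]; last by exists j.
  by rewrite /capacity big_set0.
exists phi; split=> [v|j]; first by rewrite Aphi set11.
set W := [set v | phi v == j].
have nbhdW : nbhd A W \subset [set j].
  by apply/bigcupsP => v; rewrite inE Aphi => /eqP->.
have nbhdCW : nbhd A (~: W) \subset ~: [set j].
  by apply/bigcupsP => v; rewrite !inE Aphi sub1set !inE.
have := hallA W; have := hallA (~: W).
have := capacityS nbhdW; have := capacityS nbhdCW.
have := capacityC [set j]; have := cardsC W; rewrite /capacity big_set1.
lia.
Qed.

Definition drop_edge (A : V -> {set I}) v j w := if w == v then A v :\ j else A w.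

Lemma nbhd_drop_edge (A : V -> {set I}) v (j : I) (W : {set V}) :
  nbhd (drop_edge A v j) W =
  if v \in W then nbhd A (W :\ v) :|: (A v :\ j) else nbhd A W.
Proof.
rewrite /nbhd /drop_edge; case: ifP => vW.
  rewrite (big_setD1 v vW) eqxx setUC; congr (_ :|: _).
  by apply: eq_bigr => w; rewrite !inE => /andP[/negbTE->].
by apply: eq_bigr => w wW; case: eqP => // wv; rewrite -wv wW in vW.
Qed.

Lemma hall_drop_edge_violator (A : V -> {set I}) v (j : I) :
  hall_condition A -> ~ hall_condition (drop_edge A v j) ->
  exists2 W : {set V}, v \in W &
    capacity (nbhd A (W :\ v) :|: (A v :\ j)) < #|W|.
Proof.
move=> hallA /hall_conditionP/forallPn [W]; rewrite -ltnNge nbhd_drop_edge.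
by case: ifP => [vW|_]; [exists W | rewrite ltnNge hallA].
Qed.

(* If neither deletion kept Hall's condition, the two violating sets W1, W2
   would contradict submodularity of the capacity of neighbourhoods. *)
Lemma hall_drop_edge (A : V -> {set I}) v (j1 j2 : I) :
  j1 \in A v -> j2 \in A v -> j1 != j2 -> hall_condition A ->
  hall_condition (drop_edge A v j1) \/ hall_condition (drop_edge A v j2).
Proof.
move=> Aj1 Aj2 j12 hallA.
have [hall1|not1] := hall_conditionP (drop_edge A v j1); first by left.
have [hall2|not2] := hall_conditionP (drop_edge A v j2); first by right.
exfalso.
have [W1 vW1 lt1] := hall_drop_edge_violator hallA not1.
have [W2 vW2 lt2] := hall_drop_edge_violator hallA not2.
set X := _ :|: (A v :\ j1) in lt1; set Y := _ :|: (A v :\ j2) in lt2.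
have sU : nbhd A (W1 :|: W2) \subset X :|: Y.
  apply/bigcupsP => w; rewrite inE.
  have [-> _|wv /orP[wW1|wW2]] := eqVneq w v.
  - apply/subsetP => j Aj; rewrite !inE Aj !andbT.
    by case: (eqVneq j j1) => [->|]; rewrite ?j12 !orbT.
  - by apply/subsetU/orP; left; apply/subsetU/orP; left;
      apply: bigcup_sup; rewrite !inE wv.
  - by apply/subsetU/orP; right; apply/subsetU/orP; left;
      apply: bigcup_sup; rewrite !inE wv.
have sI : nbhd A ((W1 :&: W2) :\ v) \subset X :&: Y.
  apply/bigcupsP => w; rewrite !inE => /and3P[wv wW1 wW2].
  by rewrite subsetI; apply/andP; split; apply/subsetU/orP; left;
    apply: bigcup_sup; rewrite !inE wv.
have := capacityS sU; have := capacityS sI; have := capacityUI X Y.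
have := hallA (W1 :|: W2); have := hallA ((W1 :&: W2) :\ v).
have := cardsUI W1 W2; have := cardsD1 v (W1 :&: W2); rewrite inE vW1 vW2.
lia.
Qed.

Lemma drop_edge_sub (A : V -> {set I}) v j w : drop_edge A v j w \subset A w.
Proof. by rewrite /drop_edge; case: eqP => [->|_]; rewrite ?subD1set. Qed.

Lemma sum_card_drop_edge (A : V -> {set I}) v j : j \in A v ->
  (\sum_w #|drop_edge A v j w| < \sum_w #|A w|)%N.
Proof.
move=> Aj; rewrite (bigD1 v) // [X in _ < X](bigD1 v) //= {1}/drop_edge eqxx.
rewrite (cardsD1 j (A v)) Aj add1n addSn ltnS leq_add2l.
by apply: leq_sum => w; rewrite /drop_edge => /negbTE->.
Qed.

Theorem hall_assignment (A : V -> {set I}) :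
  hall_condition A -> (\sum_j n j)%N = #|V| ->
  exists phi, exact_assignment A phi.
Proof.
move=> + sum_n; have [k] := ubnP (\sum_w #|A w|).
elim: k A => // k IH A size_A hallA.
have [/forallP le1A|/forallPn[v]] := boolP [forall v, #|A v| <= 1].
  exact: hall_assignment_singleton.
rewrite -ltnNge => /card_gt1P [j1 [j2 [Aj1 Aj2 j12]]].
have drop_edgeP j : j \in A v -> hall_condition (drop_edge A v j) ->
    exists phi, exact_assignment A phi.
  move=> Aj /(IH _ (leq_trans (sum_card_drop_edge Aj) size_A)) [phi [Aphi fiber_phi]].
  by exists phi; split=> // w; apply: subsetP (drop_edge_sub A v j w) _ (Aphi w).
by case: (hall_drop_edge Aj1 Aj2 j12 hallA);
  [apply: drop_edgeP Aj1 | apply: drop_edgeP Aj2].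
Qed.

Definition reach (F : I -> {set V}) v := [set j | v \in F j].

Lemma hall_reach (F : I -> {set V}) :
  (forall S : {set I}, capacity S <= #|\bigcup_(j in S) F j|) ->
  (\sum_j n j)%N = #|V| -> hall_condition (reach F).
Proof.
move=> capF sum_n W; set X := nbhd (reach F) W.
have coverCX : \bigcup_(j in ~: X) F j \subset ~: W.
  apply/bigcupsP => j; rewrite inE => jX; apply/subsetP => v vF; rewrite inE.
  by apply: contra jX => vW; apply/bigcupP; exists v; rewrite // inE.
have := capF (~: X); have := subset_leq_card coverCX.
have := capacityC X; have := cardsC W.
lia.
Qed.

End CapacitatedHall.

From mathcomp Require Import all_classical all_reals all_analysis lra.
Import Order.TTheory GRing.Theory Num.Theory.
Import numFieldNormedType.Exports.

Local Open Scope ring_scope.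
Local Open Scope classical_set_scope.

Lemma closed_forall (T : topologicalType) (I : Type) (P : I -> set T) :
  (forall i, closed (P i)) -> closed [set x | forall i, P i x].
Proof.
move=> P_closed; rewrite (_ : [set x | _] = \bigcap_i P i); first exact: closed_bigI.
by apply/seteqP; split=> x /= Px i //; exact: Px.
Qed.

Lemma floor_or_ceil_le (R : realType) (y : R) (k : nat) :
  k%:Z = Num.floor y \/ k%:Z = Num.ceil y -> k%:R <= y + 1.
Proof.
rewrite -[k%:R]/((k%:Z)%:~R); case=> ->; first by have := floor_le y; lra.
by have := ceilB1_lt y; rewrite intrB; lra.
Qed.

Section StationPolytope.
Variables (R : realType) (m : nat) (V : finType) (F : 'I_m -> {set V}).
Local Notation K := (@Kbar R V m F).
Local Notation N := #|V|.

Lemma rounding_capacity_le (x : 'rV[R]_m) n (S : {set 'I_m}) :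
  is_rounding N x n ->
  (capacity n S)%:R <= N%:R * \sum_(j in S) x ord0 j + #|S|%:R.
Proof.
move=> [round_n _]; rewrite /capacity natr_sum.
apply: le_trans (ler_sum _ (fun j _ => floor_or_ceil_le (round_n j))) _.
by rewrite big_split /= -mulr_sumr sumr_const.
Qed.

Lemma rounding_capacity_eq0 (x : 'rV[R]_m) n (S : {set 'I_m}) :
  simplex x -> is_rounding N x n -> \sum_(j in S) x ord0 j = 0 ->
  capacity n S = 0%N.
Proof.
move=> [x_ge0 _] [round_n _] /(psumr_eq0P (fun j _ => x_ge0 j)) x_S0.
apply: big1 => j /x_S0 xj0; apply/eqP; rewrite -(eqz_nat _ 0).
by case: (round_n j); rewrite xj0 mulr0 ?floor0 ?ceil0 => ->.
Qed.

Lemma Kbar_capacity (x : 'rV[R]_m) n : (0 < N)%N ->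
  (\bigcup_(j < m) F j = [set: V])%SET -> K x -> is_rounding N x n ->
  forall S : {set 'I_m}, (capacity n S <= #|(\bigcup_(j in S) F j)%SET|)%N.
Proof.
move=> N_gt0 cover [simplex_x Kx] round_n S.
have [->|S_proper] := eqVneq S [set: 'I_m]%SET.
  have -> : (\bigcup_(j in [set: 'I_m]) F j)%SET = [set: V]%SET.
    by rewrite -cover; apply: eq_bigl => j; rewrite inE.
  by rewrite cardsT -round_n.2; apply: eq_leq; apply: eq_bigl => j; rewrite inE.
have := Kx S S_proper; have := rounding_capacity_le S round_n.
set sx := \sum_(j in S) _; set slack := _%:R - _%:R.
have sx_ge0 : 0 <= sx by apply: sumr_ge0 => j _; exact: simplex_x.1.
have [_ _ Nsx_le0|_ cap_le Nsx_le] := lerP slack 0.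
  have N_pos : (0 : R) < N%:R by rewrite ltr0n.
  have sx0 : sx = 0 by apply/eqP; rewrite eq_le sx_ge0 andbT -(pmulr_rle0 _ N_pos).
  by rewrite (rounding_capacity_eq0 simplex_x round_n sx0).
by rewrite -(ler_nat R); move: Nsx_le; rewrite /slack; lra.
Qed.

Lemma Kbar_feasible (x : 'rV[R]_m) : (0 < N)%N ->
  (\bigcup_(j < m) F j = [set: V])%SET -> K x -> feasible F x.
Proof.
move=> N_gt0 cover Kx; split=> [|n round_n]; first by case: Kx.
have hall_n := hall_reach (Kbar_capacity N_gt0 cover Kx round_n) round_n.2.
have [phi [reach_phi fiber_phi]] := hall_assignment hall_n round_n.2.
by exists phi; split=> // v; move: (reach_phi v); rewrite inE.
Qed.

Lemma continuous_row_sum (P : pred 'I_m) :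
  continuous (fun x : 'rV[R]_m => \sum_(j | P j) x ord0 j).
Proof.
by apply: continuous_big => [|j _]; [exact: add_continuous | exact: coord_continuous].
Qed.

Lemma closed_Kbar : closed K.
Proof.
apply: closedI; first apply: closedI.
- apply: closed_forall => j.
  apply: (@preimage_closed _ _ (fun x : 'rV[R]_m => x ord0 j) [set y | 0 <= y]).
    by move=> x _; exact: coord_continuous.
  exact: closed_ge.
- apply: (@preimage_closed _ _ (fun x : 'rV[R]_m => \sum_(j < m) x ord0 j)
    [set y | y = 1]).
    by move=> x _; exact: continuous_row_sum.
  exact: closed_eq.
- apply: (closed_bigI (D := [set S | S != [set: 'I_m]%SET])) => S _.
  apply: (@preimage_closed _ _ (fun x : 'rV[R]_m => N%:R * \sum_(j in S) x ord0 j)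
    [set y | y <= _]).
    move=> x _; have := @continuous_row_sum (fun j => j \in S) x.
    exact: (continuousM (@cst_continuous _ _ (N%:R : R) x)).
  exact: closed_le.
Qed.

Lemma simplex_sub_cube :
  @simplex R m `<=` [set x | forall j, `[0, 1] (x ord0 j)].
Proof.
move=> x [x_ge0 x_sum1] j /=; rewrite in_itv /= x_ge0 -x_sum1.
by rewrite (bigD1 j) //= lerDl sumr_ge0.
Qed.

Lemma compact_Kbar : compact K.
Proof.
apply: (subclosed_compact closed_Kbar).
  exact: (rV_compact (fun _ => @segment_compact R 0 1)).
by move=> x [/simplex_sub_cube].
Qed.

Lemma Kbar_convex (x y : 'rV[R]_m) (t : R) : K x -> K y -> 0 <= t -> t <= 1 ->
  K (t *: x + (1 - t) *: y).
Proof.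
move=> [[x_ge0 x_sum1] Kx] [[y_ge0 y_sum1] Ky] t_ge0 t_le1.
have sum_comb (S : pred 'I_m) : \sum_(j | S j) (t *: x + (1 - t) *: y) ord0 j =
    t * \sum_(j | S j) x ord0 j + (1 - t) * \sum_(j | S j) y ord0 j.
  by rewrite mulr_sumr mulr_sumr -big_split; apply: eq_bigr => j _; rewrite !mxE.
split; [split|].
- by move=> j; rewrite !mxE addr_ge0 // mulr_ge0 // subr_ge0.
- by rewrite sum_comb x_sum1 y_sum1; lra.
move=> S S_proper; rewrite sum_comb.
have := Ky S S_proper; have := Kx S S_proper; set c := Num.max _ _.
set sx := \sum_(j in S) _; set sy := \sum_(j in S) _ => Nx_le Ny_le.
have t'_ge0 : 0 <= 1 - t by rewrite subr_ge0.
have := ler_wpM2l t_ge0 Nx_le; have := ler_wpM2l t'_ge0 Ny_le.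
rewrite mulrDr; lra.
Qed.

End StationPolytope.

Theorem proposition1 (R : realType) (m : nat) (V : finType)
    (F : 'I_m -> {set V}) :
  (2 <= m)%N -> (0 < #|V|)%N ->
  (\bigcup_(j < m) F j = [set: V])%SET ->
  (@Kbar R V m F) !=set0 ->
  (forall x, (@Kbar R V m F) x -> feasible F x) /\
  compact (@Kbar R V m F : set 'rV[R]_m) /\
  (forall x y (t : R), (@Kbar R V m F) x -> (@Kbar R V m F) y -> 0 <= t -> t <= 1 ->
     (@Kbar R V m F) (t *: x + (1 - t) *: y)).
Proof.
move=> _ N_gt0 cover _; split; [|split].
- by move=> x; exact: Kbar_feasible.
- exact: compact_Kbar.
- exact: Kbar_convex.
Qed.
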